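(* Let $f:\mathbb{R}^+\to\mathbb{R}$ be twice continuously differentiable with $f>0$, $f'>0$, $f''>0$, and assume there exist $c_1\geq 1/2$ and $c_2>0$ such that $c_1f''(x)\leq f''(y)\leq c_2f''(x)$ for $0<x\leq y\leq 2x$. Then, with implied constants depending only on $f$: (i) $xf''(x)\ll yf''(y)$ for $0<x\leq y$; (ii) $xf''(x)\ll f'(x)\ll xf''(x)\log x$ for $x\geq 2$; (iii) $f'(x)\leq f'(y)\ll f'(x)$ for $0<x\leq y\leq 2x$; (iv) there is $\delta\geq 0$ such that $\log x\ll f'(x)\ll x^\delta$ for all $x\geq 2$; (v) for $0<x\leq a\leq b\leq 2x$ we have $f(b)-f(a)\asymp f'(x)(b-a)$ and $f'(b)-f'(a)\asymp f''(x)(b-a)$.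
   Context: $F\ll G$ means $|F|\leq C G$ for a constant $C$; $F\asymp G$ means $F\ll G$ and $G\ll F$. *)

From Stdlib Require Import Reals.
From Coquelicot Require Import Coquelicot.
Open Scope R_scope.

Definition C2_pos (f : R -> R) : Prop :=
  forall x, 0 < x ->
    ex_derive f x /\ ex_derive (Derive f) x /\
    continuous (Derive_n f 2) x.

From Stdlib Require Import Reals Lra.
From Coquelicot Require Import Coquelicot.
Open Scope R_scope.

(* Write g(x) = x f''(x).  The doubling condition with c1 >= 1/2 gives g(x) <= g(2x), so g is
   increasing up to the factor 1/c1, which is (i).  By the mean value theorem on [x/2, x], the
   dyadic increment f'(x) - f'(x/2) is comparable to g at points of [x/2, x]: this gives
   g(x) << f'(x), and telescoping f' along x, x/2, x/4, ... down to 1 gives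
   f'(x) << f'(1) + g(x) log x, which is (ii).  For x >= 2 the same increments are bounded below
   by a constant, so log x << f'(x).  Using g(x) << f'(x) once more, f'(2x) - f'(x) << f'(x); so
   f' at most multiplies by a constant K when x doubles, hence f'(x) << K^(log2 x) = x^delta,
   giving (iii) and (iv).  Finally (v) is the mean value theorem combined with (iii) and the
   doubling condition. *)

Lemma mvt_interval (h dh : R -> R) a b : a <= b ->
  (forall t, a <= t <= b -> is_derive h t (dh t)) ->
  exists c, a <= c <= b /\ h b - h a = dh c * (b - a).
Proof.
  intros Hab Hd.
  destruct (MVT_gen h a b dh) as [c Hc]; rewrite ?Rmin_left, ?Rmax_right in * by lra.
  - intros t Ht. apply Hd. lra.
  - intros t Ht. apply continuity_pt_filterlim, (ex_derive_continuous (V := R_NormedModule)).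
    exists (dh t). now apply Hd.
  - now exists c.
Qed.

Lemma pow2_unbounded x : exists n, x <= 2 ^ n.
Proof.
  destruct (Pow_x_infinity 2 ltac:(rewrite Rabs_pos_eq; lra) x) as [n Hn].
  exists n. specialize (Hn n (le_n n)).
  rewrite Rabs_pos_eq in Hn by (apply pow_le; lra). lra.
Qed.

Lemma dyadic_floor x : 1 <= x -> exists n, 2 ^ n <= x < 2 ^ S n.
Proof.
  intros Hx. destruct (pow2_unbounded (2 * x)) as [N HN].
  assert (HxN : x < 2 ^ N) by lra. clear HN.
  induction N as [|N IH]; simpl in HxN; [lra|].
  destruct (Rlt_le_dec x (2 ^ N)) as [Hlt|Hle]; [now apply IH | now exists N].
Qed.

Lemma ln_dyadic n x : 2 ^ n <= x < 2 ^ S n ->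
  INR n * ln 2 <= ln x < INR (S n) * ln 2.
Proof.
  intros [Hlo Hhi]. assert (0 < 2 ^ n) by (apply pow_lt; lra).
  rewrite <- !ln_pow by lra. split; [apply ln_le | apply ln_increasing]; lra.
Qed.

Lemma ln2_pos : 0 < ln 2.
Proof. rewrite <- ln_1. apply ln_increasing; lra. Qed.

Lemma le_add_dyadic_increments (phi : R -> R) B x n : 0 < x ->
  (forall t, 0 < t <= x -> phi t - phi (t / 2) <= B) ->
  phi x <= phi (x / 2 ^ n) + INR n * B.
Proof.
  intros Hx Hinc. induction n as [|n IH].
  - simpl. replace (x / 1) with x by field. lra.
  - assert (H1 : 1 <= 2 ^ n) by (apply pow_R1_Rle; lra).
    assert (Ht : 0 < x / 2 ^ n <= x).
    { split; [apply Rdiv_lt_0_compat; lra|].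
      apply Rmult_le_reg_r with (2 ^ n); [lra|]. field_simplify; nra. }
    specialize (Hinc _ Ht).
    replace (x / 2 ^ S n) with (x / 2 ^ n / 2) by (simpl; field; lra).
    rewrite S_INR. lra.
Qed.

Lemma add_dyadic_increments_le (phi : R -> R) L :
  (forall t, 2 <= t -> L <= phi t - phi (t / 2)) ->
  forall n x, 2 ^ n <= x -> phi (x / 2 ^ n) + INR n * L <= phi x.
Proof.
  intros Hinc n. induction n as [|n IH]; intros x Hx.
  - simpl. replace (x / 1) with x by field. lra.
  - simpl in Hx. assert (H1 : 1 <= 2 ^ n) by (apply pow_R1_Rle; lra).
    specialize (IH (x / 2) ltac:(lra)). specialize (Hinc x ltac:(lra)).
    replace (x / 2 ^ S n) with (x / 2 / 2 ^ n) by (simpl; field; lra).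
    rewrite S_INR. lra.
Qed.

Lemma ln_le_of_dyadic_increments (phi : R -> R) L : 0 < L ->
  (forall x, 1 <= x -> 0 <= phi x) ->
  (forall t, 2 <= t -> L <= phi t - phi (t / 2)) ->
  forall x, 2 <= x -> ln x <= 2 * ln 2 / L * phi x.
Proof.
  intros HL Hnn Hinc x Hx.
  destruct (dyadic_floor x) as [n Hn]; [lra|].
  destruct (ln_dyadic n x Hn) as [_ Hln]. rewrite S_INR in Hln.
  pose proof (add_dyadic_increments_le phi L Hinc n x (proj1 Hn)) as Hsum.
  assert (0 <= phi (x / 2 ^ n)).
  { apply Hnn. assert (0 < 2 ^ n) by (apply pow_lt; lra).
    apply Rmult_le_reg_r with (2 ^ n); [lra|]. field_simplify; lra. }
  assert (0 <= phi (x / 2)) by (apply Hnn; lra).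
  specialize (Hinc x Hx).
  assert (Hcount : (INR n + 1) * L <= 2 * phi x) by lra.
  pose proof ln2_pos.
  replace (2 * ln 2 / L * phi x) with (ln 2 * (2 * phi x) / L) by (field; lra).
  apply Rmult_le_reg_r with L; [lra|]. field_simplify; [nra | lra].
Qed.

Lemma le_Rpower_of_doubling (phi : R -> R) K : 1 <= K -> 0 <= phi 1 ->
  (forall x y, 0 < x -> x <= y -> phi x <= phi y) ->
  (forall x, 0 < x -> phi (2 * x) <= K * phi x) ->
  forall x, 1 <= x -> phi x <= K * phi 1 * Rpower x (ln K / ln 2).
Proof.
  intros HK H1 Hmono Hdbl.
  assert (Hpow : forall n x, 0 < x -> x <= 2 ^ n -> phi x <= K ^ n * phi 1).
  { induction n as [|n IH]; intros x Hx Hxn; simpl in Hxn |- *.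
    - rewrite Rmult_1_l. now apply Hmono.
    - specialize (IH (x / 2) ltac:(lra) ltac:(lra)).
      specialize (Hdbl (x / 2) ltac:(lra)). replace (2 * (x / 2)) with x in Hdbl by field.
      nra. }
  intros x Hx. destruct (dyadic_floor x Hx) as [n Hn].
  assert (H2n : 0 < 2 ^ n) by (apply pow_lt; lra).
  assert (HKn : K ^ n <= Rpower x (ln K / ln 2)).
  { pose proof ln2_pos.
    assert (0 <= ln K) by (rewrite <- ln_1; apply ln_le; lra).
    rewrite <- Rpower_pow by lra.
    replace (Rpower K (INR n)) with (Rpower (2 ^ n) (ln K / ln 2)).
    - apply Rle_Rpower_l; [apply Rmult_le_pos; [|apply Rlt_le, Rinv_0_lt_compat]|]; lra.
    - unfold Rpower. rewrite ln_pow by lra. f_equal. field. lra. }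
  specialize (Hpow (S n) x ltac:(lra) ltac:(lra)). simpl in Hpow.
  apply Rle_trans with (K * phi 1 * K ^ n); [lra|].
  apply Rmult_le_compat_l; [nra | exact HKn].
Qed.

Record regularly_convex (f f1 f2 : R -> R) (c1 c2 : R) : Prop := {
  rc_derive_f : forall x, 0 < x -> is_derive f x (f1 x);
  rc_derive_f1 : forall x, 0 < x -> is_derive f1 x (f2 x);
  rc_f1_pos : forall x, 0 < x -> 0 < f1 x;
  rc_f2_pos : forall x, 0 < x -> 0 < f2 x;
  rc_c1_ge : 1 / 2 <= c1;
  rc_f2_doubling : forall x y, 0 < x -> x <= y -> y <= 2 * x ->
    c1 * f2 x <= f2 y /\ f2 y <= c2 * f2 x }.

Section RegularlyConvex.

Context {f f1 f2 : R -> R} {c1 c2 : R} (Hreg : regularly_convex f f1 f2 c1 c2).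

Let f_derive := rc_derive_f _ _ _ _ _ Hreg.
Let f1_derive := rc_derive_f1 _ _ _ _ _ Hreg.
Let f1_pos := rc_f1_pos _ _ _ _ _ Hreg.
Let f2_pos := rc_f2_pos _ _ _ _ _ Hreg.
Let c1_ge := rc_c1_ge _ _ _ _ _ Hreg.
Let f2_doubling := rc_f2_doubling _ _ _ _ _ Hreg.

Lemma mvt_f a b : 0 < a -> a <= b ->
  exists c, a <= c <= b /\ f b - f a = f1 c * (b - a).
Proof. intros Ha Hab. apply mvt_interval; [lra|]. intros t Ht. apply f_derive. lra. Qed.

Lemma mvt_f1 a b : 0 < a -> a <= b ->
  exists c, a <= c <= b /\ f1 b - f1 a = f2 c * (b - a).
Proof. intros Ha Hab. apply mvt_interval; [lra|]. intros t Ht. apply f1_derive. lra. Qed.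

Lemma c2_ge_1 : 1 <= c2.
Proof.
  destruct (f2_doubling 1 1) as [_ H]; try lra.
  pose proof (f2_pos 1 ltac:(lra)). nra.
Qed.

Lemma f1_increasing x y : 0 < x -> x <= y -> f1 x <= f1 y.
Proof.
  intros Hx Hxy. destruct (mvt_f1 x y Hx Hxy) as [c [Hc E]].
  pose proof (f2_pos c ltac:(lra)). nra.
Qed.

Lemma mul_f2_doubling x y : 0 < x -> x <= y -> y <= 2 * x ->
  c1 * (x * f2 x) <= y * f2 y.
Proof.
  intros Hx Hxy Hy. destruct (f2_doubling x y Hx Hxy Hy) as [H _].
  pose proof (f2_pos x Hx). pose proof (f2_pos y ltac:(lra)). nra.
Qed.

Lemma mul_f2_le_pow2 n x : 0 < x -> x * f2 x <= 2 ^ n * x * f2 (2 ^ n * x).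
Proof.
  intros Hx. induction n as [|n IH]; simpl; [rewrite !Rmult_1_l; lra|].
  assert (Hy : 0 < 2 ^ n * x) by (apply Rmult_lt_0_compat; [apply pow_lt|]; lra).
  replace (2 * 2 ^ n * x) with (2 * (2 ^ n * x)) by ring.
  set (y := 2 ^ n * x) in *.
  (* here c1 >= 1/2 is used: 2y f''(2y) >= 2 c1 y f''(y) >= y f''(y) *)
  destruct (f2_doubling y (2 * y) Hy ltac:(lra) ltac:(lra)) as [Hdbl _].
  assert (0 < y * f2 y) by (pose proof (f2_pos y Hy); nra).
  assert (2 * y * (c1 * f2 y) <= 2 * y * f2 (2 * y)) by (apply Rmult_le_compat_l; lra).
  nra.
Qed.

Lemma mul_f2_almost_increasing x y : 0 < x -> x <= y -> c1 * (x * f2 x) <= y * f2 y.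
Proof.
  intros Hx Hxy.
  destruct (dyadic_floor (y / x)) as [n [Hlo Hhi]].
  { apply Rmult_le_reg_r with x; [lra|]. field_simplify; lra. }
  assert (Hz : 2 ^ n * x <= y <= 2 * (2 ^ n * x)).
  { simpl in Hhi. split; apply Rmult_le_reg_r with (/ x);
      try (apply Rinv_0_lt_compat; lra); field_simplify; lra. }
  assert (H2n : 0 < 2 ^ n * x) by (apply Rmult_lt_0_compat; [apply pow_lt|]; lra).
  pose proof (mul_f2_le_pow2 n x Hx).
  pose proof (mul_f2_doubling _ y H2n (proj1 Hz) (proj2 Hz)).
  rewrite Rmult_assoc in *. nra.
Qed.

Lemma mul_f2_le_f1 x : 0 < x -> x * f2 x <= 2 * c2 * f1 x.
Proof.
  intros Hx. destruct (mvt_f1 (x / 2) x ltac:(lra) ltac:(lra)) as [c [Hc E]].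
  destruct (f2_doubling c x ltac:(lra) ltac:(lra) ltac:(lra)) as [_ Hx2].
  pose proof (f1_pos (x / 2) ltac:(lra)). pose proof (f2_pos c ltac:(lra)).
  assert (x * f2 x <= x * (c2 * f2 c)) by (apply Rmult_le_compat_l; lra).
  assert (0 <= c2 * f1 (x / 2)) by (pose proof c2_ge_1; nra).
  nra.
Qed.

Lemma f1_doubling x y : 0 < x -> x <= y -> y <= 2 * x -> f1 y <= (1 + 2 * c2 ^ 2) * f1 x.
Proof.
  intros Hx Hxy Hy. destruct (mvt_f1 x y Hx Hxy) as [c [Hc E]].
  destruct (f2_doubling x c Hx ltac:(lra) ltac:(lra)) as [_ Hc2].
  pose proof (mul_f2_le_f1 x Hx). pose proof c2_ge_1.
  pose proof (f2_pos c ltac:(lra)). pose proof (f2_pos x Hx).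
  assert (f2 c * (y - x) <= c2 * f2 x * x) by (apply Rmult_le_compat; nra).
  assert (c2 * (x * f2 x) <= c2 * (2 * c2 * f1 x)) by (apply Rmult_le_compat_l; lra).
  nra.
Qed.

Lemma f1_halving_increment_le t x : 0 < t -> t <= x -> c1 * (f1 t - f1 (t / 2)) <= x * f2 x.
Proof.
  intros Ht Htx. destruct (mvt_f1 (t / 2) t ltac:(lra) ltac:(lra)) as [c [Hc E]].
  pose proof (mul_f2_almost_increasing c x ltac:(lra) ltac:(lra)).
  pose proof (f2_pos c ltac:(lra)).
  assert (f2 c * (t - t / 2) <= c * f2 c) by nra.
  nra.
Qed.

Lemma f1_halving_increment_ge x : 2 <= x -> c1 * f2 1 / 2 <= f1 x - f1 (x / 2).
Proof.
  intros Hx. destruct (mvt_f1 (x / 2) x ltac:(lra) ltac:(lra)) as [c [Hc E]].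
  pose proof (mul_f2_almost_increasing 1 c ltac:(lra) ltac:(lra)).
  pose proof (f2_pos c ltac:(lra)).
  assert (c * f2 c <= f2 c * (x - x / 2) * 2) by nra.
  lra.
Qed.

Lemma f1_le_mul_f2_ln x : 2 <= x ->
  f1 x <= (f1 1 / (c1 * f2 1 * ln 2) + 2 / (c1 * ln 2)) * (x * f2 x * ln x).
Proof.
  intros Hx. destruct (dyadic_floor x) as [n Hn]; [lra|].
  destruct (ln_dyadic n x Hn) as [Hln _].
  assert (H2n : 0 < 2 ^ S n) by (apply pow_lt; lra).
  assert (Hinc : forall t, 0 < t <= x -> f1 t - f1 (t / 2) <= x * f2 x / c1).
  { intros t Ht. apply Rmult_le_reg_l with c1; [lra|].
    replace (c1 * (x * f2 x / c1)) with (x * f2 x) by (field; lra).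
    apply f1_halving_increment_le; lra. }
  pose proof (le_add_dyadic_increments f1 _ x (S n) ltac:(lra) Hinc).
  assert (Hsmall : f1 (x / 2 ^ S n) <= f1 1).
  { apply f1_increasing; [apply Rdiv_lt_0_compat; lra|].
    apply Rmult_le_reg_r with (2 ^ S n); [lra|]. field_simplify; lra. }
  pose proof ln2_pos. assert (Hln2 : ln 2 <= ln x) by (apply ln_le; lra).
  pose proof (mul_f2_almost_increasing 1 x ltac:(lra) ltac:(lra)) as Hg1.
  pose proof (f2_pos 1 ltac:(lra)). pose proof (f1_pos 1 ltac:(lra)).
  assert (Hf11 : f1 1 <= f1 1 / (c1 * f2 1 * ln 2) * (x * f2 x * ln x)).
  { assert (HD : 0 < c1 * f2 1 * ln 2) by (apply Rmult_lt_0_compat; nra).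
    apply Rle_trans with (f1 1 / (c1 * f2 1 * ln 2) * (c1 * f2 1 * ln 2)); [right; field; lra|].
    apply Rmult_le_compat_l; [apply Rlt_le, Rdiv_lt_0_compat; lra|].
    apply Rmult_le_compat; nra. }
  assert (Hsteps : INR (S n) * (x * f2 x / c1) <= 2 / (c1 * ln 2) * (x * f2 x * ln x)).
  { rewrite S_INR. apply Rmult_le_reg_r with (c1 * ln 2); [nra|].
    assert (0 < x * f2 x) by (pose proof (f2_pos x ltac:(lra)); nra).
    assert (INR n * ln 2 + ln 2 <= 2 * ln x) by lra.
    field_simplify; nra. }
  lra.
Qed.

Lemma ln_le_f1 x : 2 <= x -> ln x <= 4 * ln 2 / (c1 * f2 1) * f1 x.
Proof.
  intros Hx. pose proof (f2_pos 1 ltac:(lra)).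
  replace (4 * ln 2 / (c1 * f2 1)) with (2 * ln 2 / (c1 * f2 1 / 2)) by (field; nra).
  apply ln_le_of_dyadic_increments; [nra | | exact f1_halving_increment_ge | exact Hx].
  intros y Hy. apply Rlt_le, f1_pos. lra.
Qed.

Lemma f1_le_Rpower x : 1 <= x ->
  f1 x <= (1 + 2 * c2 ^ 2) * f1 1 * Rpower x (ln (1 + 2 * c2 ^ 2) / ln 2).
Proof.
  apply le_Rpower_of_doubling; [nra | apply Rlt_le, f1_pos; lra | exact f1_increasing |].
  intros y Hy. apply f1_doubling; lra.
Qed.

Lemma f_increment_bounds x a b : 0 < x -> x <= a -> a <= b -> b <= 2 * x ->
  f1 x * (b - a) <= f b - f a <= (1 + 2 * c2 ^ 2) * (f1 x * (b - a)).
Proof.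
  intros Hx Hxa Hab Hb. destruct (mvt_f a b ltac:(lra) Hab) as [c [Hc ->]].
  pose proof (f1_increasing x c Hx ltac:(lra)).
  pose proof (f1_doubling x c Hx ltac:(lra) ltac:(lra)).
  split; [|rewrite <- Rmult_assoc]; apply Rmult_le_compat_r; lra.
Qed.

Lemma f1_increment_bounds x a b : 0 < x -> x <= a -> a <= b -> b <= 2 * x ->
  c1 * (f2 x * (b - a)) <= f1 b - f1 a <= c2 * (f2 x * (b - a)).
Proof.
  intros Hx Hxa Hab Hb. destruct (mvt_f1 a b ltac:(lra) Hab) as [c [Hc ->]].
  destruct (f2_doubling x c Hx ltac:(lra) ltac:(lra)).
  rewrite <- !Rmult_assoc. split; apply Rmult_le_compat_r; lra.
Qed.

Lemma f1_O_bounds_mul_f2 : exists C, forall x, 2 <= x ->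
  Rabs (x * f2 x) <= C * f1 x /\ Rabs (f1 x) <= C * (x * f2 x * ln x).
Proof.
  pose proof c2_ge_1. pose proof ln2_pos.
  pose proof (f1_pos 1 Rlt_0_1). pose proof (f2_pos 1 Rlt_0_1).
  set (A := f1 1 / (c1 * f2 1 * ln 2) + 2 / (c1 * ln 2)).
  assert (0 < A) by (apply Rplus_lt_0_compat; apply Rdiv_lt_0_compat;
                     repeat apply Rmult_lt_0_compat; lra).
  exists (2 * c2 + A). intros x Hx.
  pose proof (f1_pos x ltac:(lra)). pose proof (f2_pos x ltac:(lra)).
  assert (ln 2 <= ln x) by (apply ln_le; lra).
  pose proof (mul_f2_le_f1 x ltac:(lra)).
  pose proof (f1_le_mul_f2_ln x Hx) as Hup. fold A in Hup.
  assert (0 < x * f2 x) by nra.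
  assert (0 < x * f2 x * ln x) by (apply Rmult_lt_0_compat; lra).
  rewrite !Rabs_pos_eq by lra. split; nra.
Qed.

Lemma f1_O_bounds_ln_Rpower : exists delta, 0 <= delta /\ exists C, forall x, 2 <= x ->
  Rabs (ln x) <= C * f1 x /\ Rabs (f1 x) <= C * Rpower x delta.
Proof.
  pose proof c2_ge_1. pose proof ln2_pos.
  pose proof (f1_pos 1 Rlt_0_1). pose proof (f2_pos 1 Rlt_0_1).
  set (K := 1 + 2 * c2 ^ 2). assert (HK : 1 <= K) by (unfold K; nra).
  exists (ln K / ln 2). split.
  { apply Rle_mult_inv_pos; [rewrite <- ln_1; apply ln_le|]; lra. }
  set (B := 4 * ln 2 / (c1 * f2 1)).
  assert (0 < B) by (apply Rdiv_lt_0_compat; nra).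
  exists (B + K * f1 1). intros x Hx.
  assert (0 < Rpower x (ln K / ln 2)) by apply exp_pos.
  pose proof (f1_pos x ltac:(lra)). assert (ln 2 <= ln x) by (apply ln_le; lra).
  assert (0 < K * f1 1) by nra.
  pose proof (ln_le_f1 x Hx) as Hlo. fold B in Hlo.
  pose proof (f1_le_Rpower x ltac:(lra)) as Hup. fold K in Hup.
  rewrite !Rabs_pos_eq by lra. split; nra.
Qed.

Lemma increments_O_bounds : exists C, forall x a b, 0 < x -> x <= a -> a <= b -> b <= 2 * x ->
  Rabs (f b - f a) <= C * (f1 x * (b - a)) /\
  Rabs (f1 x * (b - a)) <= C * (f b - f a) /\
  Rabs (f1 b - f1 a) <= C * (f2 x * (b - a)) /\
  Rabs (f2 x * (b - a)) <= C * (f1 b - f1 a).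
Proof.
  pose proof c2_ge_1.
  exists (1 + 2 * c2 ^ 2 + c2 + 2). intros x a b Hx Hxa Hab Hb.
  pose proof (f1_pos x Hx). pose proof (f2_pos x Hx).
  pose proof (f_increment_bounds x a b Hx Hxa Hab Hb).
  pose proof (f1_increment_bounds x a b Hx Hxa Hab Hb).
  set (P := f1 x * (b - a)) in *. set (Q := f2 x * (b - a)) in *.
  assert (0 <= P) by (unfold P; nra). assert (0 <= Q) by (unfold Q; nra).
  assert (Q <= 2 * (f1 b - f1 a)) by nra.
  rewrite !Rabs_pos_eq by nra. repeat split; nra.
Qed.

End RegularlyConvex.

Theorem lemma7 (f : R -> R)
  (hC2 : C2_pos f)
  (hf : forall x, 0 < x -> 0 < f x)
  (hf1 : forall x, 0 < x -> 0 < Derive f x)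
  (hf2 : forall x, 0 < x -> 0 < Derive_n f 2 x)
  (hreg : exists c1 c2, 1/2 <= c1 /\ 0 < c2 /\
     forall x y, 0 < x -> x <= y -> y <= 2 * x ->
       c1 * Derive_n f 2 x <= Derive_n f 2 y /\
       Derive_n f 2 y <= c2 * Derive_n f 2 x) :
  (* (i) *)
  (exists C, forall x y, 0 < x -> x <= y ->
     Rabs (x * Derive_n f 2 x) <= C * (y * Derive_n f 2 y)) /\
  (* (ii) *)
  (exists C, forall x, 2 <= x ->
     Rabs (x * Derive_n f 2 x) <= C * Derive f x /\
     Rabs (Derive f x) <= C * (x * Derive_n f 2 x * ln x)) /\
  (* (iii) *)
  (forall x y, 0 < x -> x <= y -> y <= 2 * x -> Derive f x <= Derive f y) /\
  (exists C, forall x y, 0 < x -> x <= y -> y <= 2 * x ->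
     Rabs (Derive f y) <= C * Derive f x) /\
  (* (iv) *)
  (exists delta, 0 <= delta /\ exists C, forall x, 2 <= x ->
     Rabs (ln x) <= C * Derive f x /\
     Rabs (Derive f x) <= C * Rpower x delta) /\
  (* (v) *)
  (exists C, forall x a b, 0 < x -> x <= a -> a <= b -> b <= 2 * x ->
     Rabs (f b - f a) <= C * (Derive f x * (b - a)) /\
     Rabs (Derive f x * (b - a)) <= C * (f b - f a) /\
     Rabs (Derive f b - Derive f a) <= C * (Derive_n f 2 x * (b - a)) /\
     Rabs (Derive_n f 2 x * (b - a)) <= C * (Derive f b - Derive f a)).
Proof.
  destruct hreg as (c1 & c2 & Hc1 & _ & Hdbl).
  assert (Hreg : regularly_convex f (Derive f) (Derive_n f 2) c1 c2).
  { split; try assumption; intros x Hx; apply Derive_correct, (hC2 x Hx). }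
  split; [|split; [|split; [|split; [|split]]]].
  - exists 2. intros x y Hx Hxy.
    assert (0 < x * Derive_n f 2 x) by (pose proof (hf2 x Hx); nra).
    pose proof (mul_f2_almost_increasing Hreg x y Hx Hxy).
    rewrite Rabs_pos_eq; nra.
  - exact (f1_O_bounds_mul_f2 Hreg).
  - intros x y Hx Hxy _. exact (f1_increasing Hreg x y Hx Hxy).
  - exists (1 + 2 * c2 ^ 2). intros x y Hx Hxy Hy. pose proof (hf1 y ltac:(lra)).
    rewrite Rabs_pos_eq by lra. exact (f1_doubling Hreg x y Hx Hxy Hy).
  - exact (f1_O_bounds_ln_Rpower Hreg).
  - exact (increments_O_bounds Hreg).
Qed.
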